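(* Let $f\colon\mathbb Q\to\mathbb R$ be arbitrary and $\sigma\in\mathbb C$. Then for every $n\ge1$, $$F_{n,\sigma}(f)=\sum_{d=1}^n\frac{1}{d^{2\sigma}}\,(\mu*D_{f_\sigma})(d)=\sum_{d\le n}\frac{D_{f_\sigma}(d)}{d^{2\sigma}}\Big(\sum_{\lambda\le n/d}\frac{\mu(\lambda)}{\lambda^{2\sigma}}\Big).$$
   Context: $\mathcal F_n=\{j/m: 1\le j\le m\le n,\ \gcd(j,m)=1\}$. $f_\sigma(x)=f(x)/x^\sigma$ for rational $x>0$ ($x^\sigma=e^{\sigma\log x}$). $F_{n,\sigma}(f)=\sum_{\kappa/\lambda\in\mathcal F_n}(\kappa\lambda)^{-\sigma}f(\kappa/\lambda)$. $D_g(d)=\sum_{k=1}^d g(k/d)$. $\mu$ is the Möbius function and $(\mu*a)(d)=\sum_{e\mid d}\mu(d/e)a(e)$ is the Dirichlet convolution. *)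

From mathcomp Require Import all_boot all_order all_algebra.
From mathcomp Require Import complex.
From mathcomp Require Import all_classical all_reals all_analysis.
Set Implicit Arguments. Unset Strict Implicit. Unset Printing Implicit Defensive.
Import Order.TTheory GRing.Theory Num.Theory.
Local Open Scope ring_scope.
Local Open Scope complex_scope.

(* Möbius function (with the harmless convention mu 0 = 0). *)
Definition moebius (n : nat) : int :=
  if (0 < n)%N && all (fun p => logn p n == 1)%N (primes n)
  then (-1) ^+ size (primes n) else 0.

Section Defs.
Variable R : realType.

(* Complex power x^s := exp(s log x) for real x > 0, written out:
   s log x = (Re s) ln x + i (Im s) ln x. *)
Definition cpow (x : R) (s : R[i]) : R[i] :=
  let a : R := @complex.Re R s * ln x in let b : R := @complex.Im R s * ln x in
  (expR a * cos b) +i* (expR a * sin b).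

Definition fsigma (f : rat -> R) (s : R[i]) (x : rat) : R[i] :=
  (f x)%:C / cpow (ratr x) s.

(* F_{n,sigma}(f) = sum over kappa/lambda in the Farey set F_n
   (reduced fractions, 1 <= kappa <= lambda <= n) *)
Definition Farey_sum (n : nat) (s : R[i]) (f : rat -> R) : R[i] :=
  \sum_(1 <= l < n.+1) \sum_(1 <= k < l.+1 | coprime k l)
     cpow ((k * l)%:R) (- s) * (f (k%:Q / l%:Q))%:C.

Definition Dsum (g : rat -> R[i]) (d : nat) : R[i] :=
  \sum_(1 <= k < d.+1) g (k%:Q / d%:Q).

Definition mu_conv (a : nat -> R[i]) (d : nat) : R[i] :=
  \sum_(e <- divisors d) (moebius (d %/ e))%:~R * a e.

End Defs.

From mathcomp Require Import all_boot all_order all_algebra.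
From mathcomp Require Import complex.
From mathcomp Require Import all_classical all_reals all_analysis.
From mathcomp Require Import ring.
Import Order.TTheory GRing.Theory Num.Theory.
Local Open Scope ring_scope.

(* Grouping the fractions k/d (1 <= k <= d) by their reduced denominator m | d gives
   D_g(d) = sum_{m | d} P_g(m), where P_g(m) = [reduced_frac_sum g m] sums g over the
   reduced fractions j/m; Moebius inversion turns this into (mu * D_g)(d) = P_g(d).
   Since (k l)^-s f(k/l) = l^-2s f_s(k/l), the Farey sum is sum_{l <= n} l^-2s P_{f_s}(l),
   which is the first identity.  The second follows by writing d = e l and using the
   complete multiplicativity of d |-> d^-2s. *)

Lemma divKn_dvd {d u} : (0 < d)%N -> (u %| d)%N -> (d %/ (d %/ u))%N = u.
Proof. by move=> d_gt0 u_dvd; rewrite divnA // mulKn. Qed.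

Lemma divn_dvd_gt0 {d u} : (0 < d)%N -> (u %| d)%N -> (0 < d %/ u)%N.
Proof.
by move=> d_gt0 u_dvd; rewrite divn_gt0 (dvdn_gt0 d_gt0 u_dvd, dvdn_leq d_gt0 u_dvd).
Qed.

Section DivisorSums.
Context {V : nmodType}.
Implicit Types (F : nat -> V) (P : pred nat).

Lemma perm_divisors_nat {N d} : (0 < d)%N -> (d <= N)%N ->
  perm_eq (divisors d) [seq e <- index_iota 1 N.+1 | e %| d]%N.
Proof.
move=> d_gt0 leqdN; apply: uniq_perm; rewrite ?divisors_uniq ?filter_uniq ?iota_uniq //.
move=> e; rewrite -dvdn_divisors // mem_filter mem_index_iota.
have [e_dvd|] := boolP (e %| d)%N => //=.
by rewrite (dvdn_gt0 d_gt0 e_dvd) ltnS (leq_trans (dvdn_leq d_gt0 e_dvd)).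
Qed.

Lemma big_divisors_nat {N d P F} : (0 < d)%N -> (d <= N)%N ->
  \sum_(e <- divisors d | P e) F e = \sum_(1 <= e < N.+1 | (e %| d)%N && P e) F e.
Proof.
by move=> d_gt0 leqdN; rewrite (perm_big _ (perm_divisors_nat d_gt0 leqdN)) big_filter_cond.
Qed.

Lemma big_divisors_compl d F : (0 < d)%N ->
  \sum_(e <- divisors d) F (d %/ e)%N = \sum_(e <- divisors d) F e.
Proof.
move=> d_gt0; rewrite -(big_map (fun e => d %/ e)%N xpredT).
have divnK' e : e \in divisors d -> (d %/ (d %/ e) = e)%N.
  by rewrite -dvdn_divisors //; apply: divKn_dvd.
apply: perm_big; apply: uniq_perm; rewrite ?divisors_uniq //.
  by rewrite map_inj_in_uniq ?divisors_uniq // => x y /divnK' {2}<- /divnK' {2}<- ->.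
move=> e; rewrite -dvdn_divisors //; apply/mapP/idP => [[x x_dvd ->]|e_dvd].
  by rewrite dvdn_div // dvdn_divisors.
by exists (d %/ e)%N; rewrite ?divnK' // -dvdn_divisors // dvdn_div.
Qed.

Lemma big_nat_dvd_mul t n P F : (0 < t)%N ->
  \sum_(1 <= k < n.+1 | (t %| k)%N && P k) F k =
  \sum_(1 <= j < (n %/ t).+1 | P (t * j)%N) F (t * j)%N.
Proof.
move=> t_gt0; elim: n => [|n IHn]; first by rewrite div0n !big_geq.
rewrite big_mkcond big_nat_recr //= -big_mkcond IHn divnS //.
have [t_dvd|] := boolP (t %| n.+1)%N; last by rewrite addr0.
rewrite add1n [in RHS]big_mkcond big_nat_recr //= -big_mkcond.
suff -> : (t * (n %/ t).+1 = n.+1)%N by [].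
by rewrite -[RHS](divnK t_dvd) divnS // t_dvd mulnC.
Qed.

Lemma exchange_big_divisors d (h : nat -> nat -> V) : (0 < d)%N ->
  \sum_(u <- divisors d) \sum_(m <- divisors (d %/ u)) h u m =
  \sum_(m <- divisors d) \sum_(u <- divisors (d %/ m)) h u m.
Proof.
move=> d_gt0.
have inner x : x \in divisors d -> forall G : nat -> V,
    \sum_(y <- divisors (d %/ x)) G y = \sum_(1 <= y < d.+1 | (y * x %| d)%N) G y.
  rewrite -dvdn_divisors // => x_dvd G.
  rewrite (big_divisors_nat (divn_dvd_gt0 d_gt0 x_dvd) (leq_div d x)).
  by apply: eq_bigl => y; rewrite andbT dvdn_divRL.
rewrite (eq_big_seq _ (fun u ud => inner u ud _)).
rewrite [RHS](eq_big_seq _ (fun m md => inner m md _)).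
rewrite !(big_divisors_nat d_gt0 (leqnn d)).
have drop_outer (H : nat -> nat -> V) : \sum_(1 <= e < d.+1 | (e %| d)%N && true)
      \sum_(1 <= y < d.+1 | (y * e %| d)%N) H e y =
    \sum_(1 <= e < d.+1) \sum_(1 <= y < d.+1 | (y * e %| d)%N) H e y.
  rewrite big_mkcond; apply: eq_bigr => e _; rewrite andbT.
  have [//|e_ndvd] := boolP (e %| d)%N; rewrite big1 // => y.
  by move=> /(dvdn_trans (dvdn_mull y (dvdnn e))); rewrite (negbTE e_ndvd).
rewrite !drop_outer [RHS](exchange_big_dep_nat xpredT) //=.
by apply: eq_bigr => e _; apply: eq_bigl => y; rewrite mulnC.
Qed.

Lemma big_divisor_pairs n (h : nat -> nat -> V) :
  \sum_(1 <= d < n.+1) \sum_(e <- divisors d) h e (d %/ e)%N =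
  \sum_(1 <= e < n.+1) \sum_(1 <= l < (n %/ e).+1) h e l.
Proof.
rewrite (eq_big_nat _ _ (F2 := fun d =>
  \sum_(1 <= e < n.+1 | (e %| d)%N && true) h e (d %/ e)%N)) => [|d /andP[d_gt0 ltdn]].
  rewrite (exchange_big_dep_nat xpredT) //=; apply: eq_big_nat => e /andP[e_gt0 _].
  rewrite (eq_bigl (fun d => (e %| d)%N && true)) => [|d]; last by rewrite andbT.
  by rewrite big_nat_dvd_mul //; apply: eq_bigr => l _; rewrite mulKn.
exact: big_divisors_nat.
Qed.

Lemma big_fiber_seq (I J : eqType) (r : seq I) (s : seq J) (phi : I -> J)
    (F : I -> V) : uniq s -> {in r, forall i, phi i \in s} ->
  \sum_(i <- r) F i = \sum_(j <- s) \sum_(i <- r | phi i == j) F i.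
Proof.
move=> s_uniq phi_s; rewrite (exchange_big_dep xpredT) //=.
apply: eq_big_seq => i /phi_s phi_i; rewrite -big_filter.
rewrite (eq_filter (a2 := pred1 (phi i))) => [|j]; last by rewrite eq_sym.
by rewrite filter_pred1_uniq ?big_seq1.
Qed.
End DivisorSums.

Lemma moebius_mul_prime_dvd p e : prime p -> (0 < e)%N -> (p %| e)%N ->
  moebius (p * e) = 0.
Proof.
move=> p_pr e_gt0 p_dvd; have p_gt0 := prime_gt0 p_pr.
rewrite /moebius muln_gt0 p_gt0 e_gt0 /=; case: ifP => // /allP sqfree.
have: p \in primes (p * e) by rewrite mem_primes p_pr muln_gt0 p_gt0 e_gt0 dvdn_mulr.
move/sqfree; rewrite lognM // logn_prime // eqxx.
by rewrite -[logn p e]prednK ?logn_gt0 ?mem_primes ?p_pr ?e_gt0.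
Qed.

Lemma moebius_mul_prime p e : prime p -> (0 < e)%N -> ~~ (p %| e)%N ->
  moebius (p * e) = - moebius e.
Proof.
move=> p_pr e_gt0 p_ndvd; have p_gt0 := prime_gt0 p_pr.
have p_nprimes : p \notin primes e by rewrite mem_primes p_pr e_gt0.
have perm_primes : perm_eq (primes (p * e)) (p :: primes e).
  apply: uniq_perm; rewrite /= ?p_nprimes ?primes_uniq // => q.
  by rewrite primesM // primes_prime // in_cons in_nil orbF.
have logn_pe0 : logn p e = 0%N by apply/eqP; rewrite -leqn0 leqNgt logn_gt0.
have sqfree_pe : all (fun q => logn q (p * e) == 1%N) (primes (p * e)) =
                 all (fun q => logn q e == 1%N) (primes e).
  rewrite (perm_all _ perm_primes) /= lognM // logn_prime // eqxx logn_pe0 /=.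
  apply: eq_in_all => q q_e; rewrite lognM // logn_prime //.
  by have [q_p|//] := eqVneq q p; rewrite q_p (negbTE p_nprimes) in q_e.
rewrite /moebius muln_gt0 p_gt0 e_gt0 /= sqfree_pe (perm_size perm_primes) /=.
by case: ifP; rewrite ?oppr0 // exprS mulN1r.
Qed.

Lemma sum_moebius_divisors x : (0 < x)%N ->
  \sum_(u <- divisors x) moebius u = (x == 1%N)%:R.
Proof.
case: (ltngtP x 1) => [|x_gt1 _|-> _]; [by case: x | | by rewrite big_seq1].
have x_gt0 := ltnW x_gt1.
pose p := pdiv x; have p_pr : prime p by apply: pdiv_prime.
have p_gt0 := prime_gt0 p_pr; have p_dvd : (p %| x)%N by apply: pdiv_dvd.
have xp_gt0 := divn_dvd_gt0 x_gt0 p_dvd.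
rewrite (bigID (fun u => p %| u)%N) /=.
have sum_p_dvd : \sum_(u <- divisors x | (p %| u)%N) moebius u =
                 - \sum_(j <- divisors (x %/ p) | ~~ (p %| j)%N) moebius j.
  rewrite (big_divisors_nat x_gt0 (leqnn x)).
  rewrite (eq_bigl (fun u => (p %| u)%N && (u %| x)%N)) => [|u]; last exact: andbC.
  rewrite big_nat_dvd_mul // -sumrN.
  rewrite (eq_bigl (fun j => (j %| x %/ p)%N && true)) => [|j]; last first.
    by rewrite andbT dvdn_divRL // mulnC.
  rewrite -(big_divisors_nat xp_gt0 (leqnn _)) (bigID (fun j => p %| j)%N) /=.
  rewrite big1_seq ?add0r => [|j /andP[p_dvd_j]]; last first.
    by rewrite -dvdn_divisors // => /(dvdn_gt0 xp_gt0) j_gt0; apply: moebius_mul_prime_dvd.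
  rewrite big_seq_cond [RHS]big_seq_cond; apply: eq_bigr => j /andP[j_dvd p_ndvd_j].
  by apply: moebius_mul_prime; rewrite // (dvdn_gt0 xp_gt0) ?dvdn_divisors.
have sum_p_ndvd : \sum_(u <- divisors x | ~~ (p %| u)%N) moebius u =
                  \sum_(j <- divisors (x %/ p) | ~~ (p %| j)%N) moebius j.
  rewrite (big_divisors_nat x_gt0 (leqnn x)) (big_divisors_nat xp_gt0 (leq_div x p)).
  apply: eq_bigl => u; have [|p_ndvd_u] := boolP (p %| u)%N; rewrite ?andbF // !andbT.
  by rewrite dvdn_divRL // Gauss_dvd ?p_dvd ?andbT // coprime_sym prime_coprime.
by rewrite sum_p_dvd sum_p_ndvd addNr.
Qed.

Lemma moebius_inversion (K : pzRingType) (a b : nat -> K) d :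
  (forall e, (0 < e)%N -> a e = \sum_(m <- divisors e) b m) -> (0 < d)%N ->
  \sum_(e <- divisors d) (moebius (d %/ e))%:~R * a e = b d.
Proof.
move=> a_sum d_gt0.
rewrite -(big_divisors_compl d (fun e => (moebius (d %/ e))%:~R * a e)) //.
transitivity (\sum_(u <- divisors d) \sum_(m <- divisors (d %/ u)) (moebius u)%:~R * b m).
  apply: eq_big_seq => u; rewrite -dvdn_divisors // => u_dvd.
  by rewrite divKn_dvd // a_sum ?mulr_sumr // (divn_dvd_gt0 d_gt0 u_dvd).
rewrite exchange_big_divisors // (bigD1_seq d) ?divisors_id ?divisors_uniq //= divnn d_gt0.
rewrite -mulr_suml -rmorph_sum /= big_seq1 mul1r big1_seq ?addr0 // => m /andP[m_neq_d].
rewrite -dvdn_divisors // => m_dvd.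
rewrite -mulr_suml -rmorph_sum /= sum_moebius_divisors ?(divn_dvd_gt0 d_gt0 m_dvd) //.
suff -> : (d %/ m == 1)%N = false by rewrite mul0r.
by apply: contraNF m_neq_d => /eqP dm1; rewrite -[d in _ == d](divnK m_dvd) dm1 mul1n.
Qed.

Lemma frac_mul2l {t} (j m : nat) : (0 < t)%N ->
  (t * j)%N%:Q / (t * m)%N%:Q = j%:Q / m%:Q.
Proof.
by move=> t_gt0; rewrite !PoszM !intrM -mulf_div divff ?mul1r // intr_eq0 -lt0n.
Qed.

Lemma gcdn_eq_coprime k {d t} : (0 < d)%N -> (t %| d)%N ->
  (gcdn k d == t) = (t %| k)%N && coprime (k %/ t) (d %/ t).
Proof.
move=> d_gt0 t_dvd; have t_gt0 := dvdn_gt0 d_gt0 t_dvd.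
have [t_dvd_k|] := boolP (t %| k)%N; last first.
  by apply: contraNF => /eqP <-; apply: dvdn_gcdl.
rewrite -{1}(divnK t_dvd_k) -{1}(divnK t_dvd) -muln_gcdl /coprime.
by rewrite -[X in _ == X]mul1n eqn_pmul2r.
Qed.

Definition reduced_frac_sum {V : nmodType} (g : rat -> V) (m : nat) : V :=
  \sum_(1 <= j < m.+1 | coprime j m) g (j%:Q / m%:Q).

Lemma frac_sum_reduced {V : nmodType} (g : rat -> V) d : (0 < d)%N ->
  \sum_(1 <= k < d.+1) g (k%:Q / d%:Q) = \sum_(m <- divisors d) reduced_frac_sum g m.
Proof.
move=> d_gt0; rewrite -big_divisors_compl //.
rewrite (@big_fiber_seq _ _ _ _ _ (gcdn ^~ d) _ (divisors_uniq d)) => [|k _]; last first.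
  by rewrite -dvdn_divisors ?dvdn_gcdr.
apply: eq_big_seq => t; rewrite -dvdn_divisors // => t_dvd.
have t_gt0 := dvdn_gt0 d_gt0 t_dvd.
rewrite (eq_bigl _ _ (fun k => gcdn_eq_coprime k d_gt0 t_dvd)) big_nat_dvd_mul //.
apply: eq_big => [j|j _]; first by rewrite mulKn.
by rewrite -(frac_mul2l j (d %/ t) t_gt0) [(t * (d %/ t))%N]mulnC divnK.
Qed.

Lemma sum_dirichlet_mul (K : comPzRingType) (a b c : nat -> K) n :
  (forall x y, (0 < x)%N -> (0 < y)%N -> c (x * y)%N = c x * c y) ->
  \sum_(1 <= d < n.+1) c d * \sum_(e <- divisors d) b (d %/ e)%N * a e =
  \sum_(1 <= e < n.+1) a e * c e * \sum_(1 <= l < (n %/ e).+1) b l * c l.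
Proof.
move=> cM; under [RHS]eq_bigr do rewrite mulr_sumr; rewrite -big_divisor_pairs.
apply: eq_big_nat => d /andP[d_gt0 _]; rewrite mulr_sumr; apply: eq_big_seq => e.
rewrite -dvdn_divisors // => e_dvd.
have [e_gt0 de_gt0] := (dvdn_gt0 d_gt0 e_dvd, divn_dvd_gt0 d_gt0 e_dvd).
have -> : c d = c e * c (d %/ e)%N by rewrite -cM // mulnC divnK.
by ring.
Qed.

Local Open Scope complex_scope.

Section ComplexPower.
Context {R : realType}.
Implicit Types (x y : R) (s : R[i]).

(* [expRi a b] is exp (a + i b); [cpow x s] unfolds to [expRi (Re s * ln x) (Im s * ln x)]. *)
Definition expRi (a b : R) : R[i] := (expR a * cos b) +i* (expR a * sin b).

Lemma expRiD a1 b1 a2 b2 : expRi (a1 + a2) (b1 + b2) = expRi a1 b1 * expRi a2 b2.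
Proof.
rewrite /expRi expRD cosD sinD; apply/eqP; rewrite eq_complex /=.
by apply/andP; split; apply/eqP; ring.
Qed.

Lemma expRi0 : expRi 0 0 = 1.
Proof. by rewrite /expRi expR0 cos0 sin0 mul1r mulr0. Qed.

Lemma expRiN a b : expRi (- a) (- b) * expRi a b = 1.
Proof. by rewrite -expRiD !addNr expRi0. Qed.

Lemma expRi_neq0 a b : expRi a b != 0.
Proof. by apply: contra_eq_neq (expRiN a b) => ->; rewrite mulr0 eq_sym oner_neq0. Qed.

Lemma cpow_neq0 x s : cpow x s != 0.
Proof. exact: expRi_neq0. Qed.

Lemma cpowM x y s : 0 < x -> 0 < y -> cpow (x * y) s = cpow x s * cpow y s.
Proof. by move=> x_gt0 y_gt0; rewrite /cpow lnM ?posrE // !mulrDr -expRiD. Qed.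

Lemma cpowV x s : 0 < x -> cpow x^-1 s = (cpow x s)^-1.
Proof.
move=> x_gt0; apply: (mulIf (cpow_neq0 x s)); rewrite mulVf ?cpow_neq0 //.
by rewrite /cpow lnV ?posrE // !mulrN expRiN.
Qed.

Lemma cpowD x s1 s2 : cpow x (s1 + s2) = cpow x s1 * cpow x s2.
Proof. by case: s1 s2 => [a1 b1] [a2 b2]; rewrite /cpow /= !mulrDl -expRiD. Qed.

Lemma cpowN x s : cpow x (- s) = (cpow x s)^-1.
Proof.
apply: (mulIf (cpow_neq0 x s)); rewrite mulVf ?cpow_neq0 //.
by case: s => a b; rewrite /cpow /= !mulNr expRiN.
Qed.

Lemma cpow_mul2 x s : cpow x (2%:R * s) = cpow x s ^+ 2.
Proof. by rewrite mulr_natl mulr2n cpowD expr2. Qed.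

End ComplexPower.

Lemma ratr_frac (F : numFieldType) (k d : nat) :
  ratr (k%:Q / d%:Q) = k%:R / d%:R :> F.
Proof. by rewrite fmorph_div /= !ratr_int. Qed.

Lemma mu_conv_Dsum (R : realType) (g : rat -> R[i]) d : (0 < d)%N ->
  mu_conv (Dsum g) d = reduced_frac_sum g d.
Proof. by apply: moebius_inversion => e e_gt0; apply: frac_sum_reduced. Qed.

Lemma Farey_term_fsigma (R : realType) (f : rat -> R) s k l :
  (0 < k)%N -> (0 < l)%N ->
  cpow (k * l)%:R (- s) * (f (k%:Q / l%:Q))%:C =
  (cpow l%:R (2%:R * s))^-1 * fsigma f s (k%:Q / l%:Q).
Proof.
move=> k_gt0 l_gt0; rewrite /fsigma ratr_frac natrM cpowN cpow_mul2.
rewrite !cpowM ?invr_gt0 ?ltr0n // cpowV ?ltr0n //.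
have := cpow_neq0 k%:R s; have := cpow_neq0 l%:R s.
move: (cpow k%:R s) (cpow l%:R s) (f _)%:C => a b y b_neq0 a_neq0.
by field; rewrite a_neq0 b_neq0.
Qed.

Theorem lemma3p3 (R : realType) (f : rat -> R) (s : R[i]) (n : nat) :
  (1 <= n)%N ->
  Farey_sum n s f
    = \sum_(1 <= d < n.+1)
        (cpow (d%:R) (2%:R * s))^-1 * mu_conv (Dsum (fsigma f s)) d
  /\
  \sum_(1 <= d < n.+1)
        (cpow (d%:R) (2%:R * s))^-1 * mu_conv (Dsum (fsigma f s)) d
    = \sum_(1 <= d < n.+1)
        Dsum (fsigma f s) d / cpow (d%:R) (2%:R * s)
        * (\sum_(1 <= l < (n %/ d).+1)
              (moebius l)%:~R / cpow (l%:R) (2%:R * s)).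
Proof.
move=> _; split.
  apply: eq_big_nat => l /andP[l_gt0 _]; rewrite mu_conv_Dsum // mulr_sumr.
  rewrite big_nat_cond [RHS]big_nat_cond; apply: eq_bigr => k /andP[/andP[k_gt0 _] _].
  exact: Farey_term_fsigma.
rewrite /mu_conv (sum_dirichlet_mul _ _ (fun l => (moebius l)%:~R)
  (fun x => (cpow x%:R (2%:R * s))^-1)) //.
by move=> x y x_gt0 y_gt0; rewrite natrM cpowM ?ltr0n // invfM.
Qed.
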